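(* The at-the-point product of two cobweb tiling sequences need not be a cobweb tiling sequence. Specifically, let $A=(n_A)_{n\ge0}$ with $0_A=1$, $n_A=2$ for even $n\ge2$ and $n_A=1$ for odd $n$; and let $B=(n_B)_{n\ge0}$ with $0_B=1$, $n_B=3$ for $n\ge1$ with $3\mid n$ and $n_B=1$ otherwise. Then $A$ and $B$ are cobweb tiling sequences, while $A\cdot B$ (defined by $n_{A\cdot B}=n_A n_B$) is not a cobweb tiling sequence.
   Context: Notation: $n_F\equiv F_n$. A sequence $F=(n_F)_{n\ge0}$ of natural numbers with $0_F=1$ is cobweb-admissible iff every $F$-nomial coefficient $\binom{n}{k}_F=\frac{n_F(n-1)_F\cdots(n-k+1)_F}{1_F2_F\cdots k_F}$, $0\le k\le n$, is a nonnegative integer. The cobweb poset of $F$ has, for each $s\ge1$, a level $\Phi_s$ consisting of $s_F$ distinct vertices (levels pairwise disjoint), plus a root level $\Phi_0$ with one vertex; for $x\in\Phi_i$, $y\in\Phi_j$ one has $x<y$ iff $i<j$. For $1\le a\le b$, the layer $\langle\Phi_a\to\Phi_b\rangle$ is the subposet on $\Phi_a\cup\dots\cup\Phi_b$; it has $m=b-a+1$ levels and its maximal chains form the set $\Phi_a\times\dots\times\Phi_b$. For a permutation $\sigma$ of $\{1,\dots,m\}$, a block of type $\sigma P_m$ in this layer is the subposet induced on $V_a\cup\dots\cup V_b$ where $V_{a-1+i}\subseteq\Phi_{a-1+i}$ and $|V_{a-1+i}|=\sigma(i)_F$ for $i=1,\dots,m$; its maximal chains form the set $V_a\times\dots\times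 V_b$. A tiling of the layer is a finite family of such blocks ($\sigma$ may vary from block to block) whose sets $V_a\times\dots\times V_b$ partition $\Phi_a\times\dots\times\Phi_b$ (pairwise max-disjoint and covering all maximal chains). A cobweb tiling sequence is a cobweb-admissible sequence $F$ such that for all $1\le a\le b$ the layer $\langle\Phi_a\to\Phi_b\rangle$ admits a tiling by blocks of type $\sigma P_{b-a+1}$. *)

From Stdlib Require List.
From mathcomp Require Import all_boot all_fingroup.
Set Implicit Arguments. Unset Strict Implicit. Unset Printing Implicit Defensive.

(* F-nomial coefficient (n k)_F as numerator / denominator. *)
Definition fnom_num (F : nat -> nat) (n k : nat) : nat :=
  \prod_(0 <= i < k) F (n - i).
Definition fnom_den (F : nat -> nat) (k : nat) : nat :=
  \prod_(1 <= i < k.+1) F i.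

Definition cobweb_admissible (F : nat -> nat) : Prop :=
  F 0 = 1 /\
  forall n k, k <= n -> 0 < fnom_den F k /\ fnom_den F k %| fnom_num F n k.

(* Layer <Phi_a -> Phi_b> with m = b - a + 1 levels; index i : 'I_m stands for
   the paper's index i+1, i.e. level a + i.  Level Phi_s is {0, ..., s_F - 1}.
   A maximal chain is c : 'I_m -> nat with c i < F (a + i). *)
Definition is_chain (F : nat -> nat) (a m : nat) (c : 'I_m -> nat) : Prop :=
  forall i : 'I_m, c i < F (a + i).

(* A block: a permutation sigma of {1..m} (here of 'I_m, value sigma i + 1)
   and vertex sets V_(a+i) given as duplicate-free lists. *)
Record block (m : nat) := Block {
  bperm : {perm 'I_m};
  bsets : 'I_m -> seq nat
}.

Definition valid_block (F : nat -> nat) (a m : nat) (B : block m) : Prop :=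
  forall i : 'I_m,
    [/\ uniq (bsets B i),
        all (fun x => x < F (a + i)) (bsets B i) &
        size (bsets B i) = F (bperm B i).+1].

Definition chain_in_block (m : nat) (B : block m) (c : 'I_m -> nat) : bool :=
  [forall i : 'I_m, c i \in bsets B i].

Definition layer_tiling (F : nat -> nat) (a b : nat) : Prop :=
  exists T : seq (block (b - a).+1),
    (forall B, List.In B T -> valid_block F a B) /\
    (forall c : 'I_(b - a).+1 -> nat, is_chain F a c ->
        count (fun B => chain_in_block B c) T = 1).

Definition cobweb_tiling_sequence (F : nat -> nat) : Prop :=
  cobweb_admissible F /\
  forall a b, 1 <= a -> a <= b -> layer_tiling F a b.

Definition seqA (n : nat) : nat :=
  if n == 0 then 1 else if odd n then 1 else 2.
Definition seqB (n : nat) : nat :=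
  if n == 0 then 1 else if 3 %| n then 3 else 1.
Definition seq_prod (F G : nat -> nat) (n : nat) : nat := F n * G n.

From mathcomp Require Import all_boot all_fingroup zify.
Set Implicit Arguments. Unset Strict Implicit. Unset Printing Implicit Defensive.

(* Both A and B are instances of the "pulse" sequences  pulse p c,  which equal
   c at the positive multiples of p and 1 elsewhere (A = pulse 2 2,
   B = pulse 3 3).
   - Admissibility: the F-nomial denominators of a pulse are  c ^ (k %/ p),
     and  k %/ p + (n - k) %/ p <= n %/ p  makes every F-nomial an integer.
   - Tiling: a block type sigma such that every level receives either one
     vertex or the whole level tiles the layer, by letting the one-vertex
     levels range over all choices.  For a pulse, the rotation of the
     level indices by  (a - 1) %% p  is such a block type.
   - Failure for A.B is witnessed by a layer containing two levels that are
     smaller than every block size except F_1, which injectivity of the block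
     type forbids.
     In the layer Phi_5 -> Phi_7 the levels 5 and 7 have a single vertex,
     while (A.B)_1, (A.B)_2, (A.B)_3 = 1, 2, 3.
   The general tiling and non-tiling criteria are proved for arbitrary
   sequences F; the theorem is then a direct instantiation. *)

Lemma mem_of_In (T : eqType) (x : T) (s : seq T) : List.In x s -> x \in s.
Proof. by elim: s => //= y s IH [->|/IH]; rewrite inE ?eqxx // => ->; rewrite orbT. Qed.

Lemma fnom_numS F n k : fnom_num F n.+1 k.+1 = F n.+1 * fnom_num F n k.
Proof. by rewrite /fnom_num big_nat_recl // subn0. Qed.

Lemma fnom_num_den F n k :
  k <= n -> fnom_num F n k * fnom_den F (n - k) = fnom_den F n.
Proof.
elim: k n => [|k IH] [|n] // le_kn; first by rewrite /fnom_num big_geq ?mul1n.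
  by rewrite /fnom_num big_geq ?mul1n ?subn0.
rewrite fnom_numS subSS -mulnA IH //.
by rewrite /fnom_den (big_nat_recr n.+1) //= mulnC.
Qed.

Definition pulse (p c n : nat) : nat :=
  if n == 0 then 1 else if p %| n then c else 1.

(* The F-factorials of a pulse: one factor c per multiple of p up to k. *)
Lemma fnom_den_pulse F p c k :
  0 < p -> F =1 pulse p c -> fnom_den F k = c ^ (k %/ p).
Proof.
move=> p_gt0 eqF; elim: k => [|k IH]; first by rewrite div0n /fnom_den big_geq.
rewrite /fnom_den big_nat_recr // -/(fnom_den F k) IH eqF /pulse divnS //=.
by case: (p %| k.+1); rewrite ?muln1 // expnS mulnC.
Qed.

(* Pulses are admissible: k %/ p + (n - k) %/ p <= n %/ p. *)
Lemma pulse_admissible F p c :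
  0 < p -> 0 < c -> F =1 pulse p c -> cobweb_admissible F.
Proof.
move=> p_gt0 c_gt0 eqF; split; first by rewrite eqF.
move=> n k le_kn; rewrite (fnom_den_pulse k p_gt0 eqF) expn_gt0 c_gt0; split=> //.
have := fnom_num_den F le_kn; rewrite !(fnom_den_pulse _ p_gt0 eqF) => eq_num.
rewrite -(@dvdn_pmul2r (c ^ ((n - k) %/ p))) ?expn_gt0 ?c_gt0 // eq_num -expnD.
apply: dvdn_exp2l; rewrite -{2}(subnKC le_kn).
by rewrite divnD // leq_addr.
Qed.

Section ChoiceTiling.
(* A block type s in which every level  a + i  gets either one vertex or the
   whole level; all level sizes of the layer are bounded by N, so a vertex
   choice is a function into 'I_N.+1. *)
Variables (F : nat -> nat) (a m N : nat) (s : {perm 'I_m}).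
Hypothesis s_fits : forall i, F (s i).+1 = 1 \/ F (s i).+1 = F (a + i).
Hypothesis level_bound : forall i : 'I_m, F (a + i) <= N.

Definition full_level (i : 'I_m) : bool := F (s i).+1 != 1.

Definition choice_block (r : {ffun 'I_m -> 'I_N.+1}) : block m :=
  Block s (fun i => if full_level i then iota 0 (F (a + i)) else [:: val (r i)]).

Definition normal_choice (r : {ffun 'I_m -> 'I_N.+1}) : bool :=
  [forall i, if full_level i then val (r i) == 0 else val (r i) < F (a + i)].

Definition choice_tiling : seq (block m) :=
  map choice_block [seq r <- enum {ffun 'I_m -> 'I_N.+1} | normal_choice r].

Definition chain_choice (c : 'I_m -> nat) : {ffun 'I_m -> 'I_N.+1} :=
  [ffun i => inord (if full_level i then 0 else c i)].

Lemma choice_block_valid r : normal_choice r -> valid_block F a (choice_block r).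
Proof.
move=> /forallP normal_r i; have := normal_r i.
rewrite /choice_block /full_level /=; case: ifPn => [full_i _ | /negPn/eqP one_i lt_ri].
  have size_i : F (s i).+1 = F (a + i).
    by case: (s_fits i) => // one_i; rewrite one_i in full_i.
  rewrite iota_uniq size_iota size_i; split=> //.
  by apply/allP=> x; rewrite mem_iota.
by split; rewrite //= andbT.
Qed.

Lemma val_chain_choice c i :
  is_chain F a c -> val (chain_choice c i) = if full_level i then 0 else c i.
Proof.
move=> chain_c; rewrite ffunE /= inordK //.
by case: ifP => // _; exact: leq_trans (chain_c i) (leqW (level_bound i)).
Qed.

Lemma chain_choice_normal c : is_chain F a c -> normal_choice (chain_choice c).
Proof.
move=> chain_c; apply/forallP=> i; rewrite val_chain_choice //.
by case: ifP => full_i; rewrite ?full_i ?chain_c.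
Qed.

Lemma chain_in_choice_block r c : normal_choice r -> is_chain F a c ->
  chain_in_block (choice_block r) c = (r == chain_choice c).
Proof.
move=> /forallP normal_r chain_c; rewrite /chain_in_block.
apply/forallP/eqP => [in_r|-> i]; first apply/ffunP => i.
  apply/val_inj; have := in_r i; have := normal_r i.
  rewrite val_chain_choice // /choice_block /=.
  by case: ifP => _; [move=> /eqP | rewrite inE => _ /eqP].
rewrite /choice_block /= val_chain_choice //.
by case: ifP => full_i; rewrite ?full_i /= ?mem_iota ?inE ?chain_c.
Qed.

Lemma choice_tiling_count c :
  is_chain F a c -> count (fun B => chain_in_block B c) choice_tiling = 1.
Proof.
move=> chain_c; rewrite count_map count_filter.
rewrite (eq_count (a2 := pred1 (chain_choice c))); last first.
  move=> r /=; case normal_r: (normal_choice r); last first.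
    rewrite andbF; case: eqP normal_r => // ->.
    by rewrite chain_choice_normal.
  by rewrite chain_in_choice_block ?andbT.
by rewrite count_uniq_mem ?enum_uniq // mem_enum.
Qed.

Lemma choice_tiling_valid B : List.In B choice_tiling -> valid_block F a B.
Proof.
case/List.in_map_iff=> r [<- /mem_of_In]; rewrite mem_filter.
by case/andP=> /choice_block_valid.
Qed.

End ChoiceTiling.

Lemma layer_tiling_of_fit F a b (s : {perm 'I_(b - a).+1}) :
  (forall i, F (s i).+1 = 1 \/ F (s i).+1 = F (a + i)) -> layer_tiling F a b.
Proof.
move=> s_fits; pose N := \max_(i < (b - a).+1) F (a + i).
have level_bound (i : 'I_(b - a).+1) : F (a + i) <= N by exact: leq_bigmax.
exists (choice_tiling F a N s); split.
  exact: choice_tiling_valid.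
exact: choice_tiling_count.
Qed.

Definition rotation m t (i : 'I_m.+1) : 'I_m.+1 := Ordinal (ltn_pmod (i + t) (ltn0Sn m)).

Lemma rotation_inj m t : injective (@rotation m t).
Proof.
move=> i j /(congr1 val) /= /eqP; rewrite eqn_modDr !modn_small //.
by move=> /eqP eq_ij; apply: val_inj.
Qed.

Definition rotation_perm m t : {perm 'I_m.+1} := perm (@rotation_inj m t).

Lemma pulse_mod p c n n' :
  0 < n -> 0 < n' -> n = n' %[mod p] -> pulse p c n = pulse p c n'.
Proof.
rewrite /pulse /dvdn => /lt0n_neq0/negbTE-> /lt0n_neq0/negbTE-> eq_mod.
by rewrite eq_mod.
Qed.

Lemma pulse_below_period p c n : 0 < n < p -> pulse p c n = 1.
Proof.
case/andP=> n_gt0 lt_np; rewrite /pulse (negbTE (lt0n_neq0 n_gt0)).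
by rewrite gtnNdvd.
Qed.

(* Rotating by  (a - 1) mod p  makes the block type fit every layer starting at
   level a: an unwrapped index  i + t  lands on a level congruent to  a + i,
   a wrapped one lands strictly below p, where the pulse is 1. *)
Lemma pulse_rotation_fits F p c a m (i : 'I_m.+1) :
  0 < p -> 0 < a -> F =1 pulse p c ->
  let s := rotation_perm m ((a - 1) %% p) in
  F (s i).+1 = 1 \/ F (s i).+1 = F (a + i).
Proof.
move=> p_gt0 a_gt0 eqF /=; rewrite !eqF permE /=.
set t := (a - 1) %% p; have lt_tp : t < p by rewrite ltn_pmod.
have [no_wrap|wrap] := ltnP (i + t) m.+1.
  right; rewrite modn_small //; apply: pulse_mod; rewrite ?addn_gt0 ?a_gt0 //.
  by rewrite -addSn modnDmr addSnnS subn1 prednK // addnC.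
left; apply: pulse_below_period; rewrite /=.
have := divn_eq (i + t) m.+1; have : 0 < (i + t) %/ m.+1 by rewrite divn_gt0.
have := ltn_ord i; nia.
Qed.

Lemma pulse_layer_tiling F p c a b :
  0 < p -> F =1 pulse p c -> 1 <= a -> layer_tiling F a b.
Proof.
move=> p_gt0 eqF a_gt0.
by apply: (layer_tiling_of_fit (s := rotation_perm _ ((a - 1) %% p))) => i;
  apply: pulse_rotation_fits.
Qed.

Lemma pulse_tiling_sequence F p c :
  0 < p -> 0 < c -> F =1 pulse p c -> cobweb_tiling_sequence F.
Proof.
move=> p_gt0 c_gt0 eqF; split; first exact: pulse_admissible eqF.
by move=> a b a_gt0 _; apply: pulse_layer_tiling eqF a_gt0.
Qed.

Lemma seqA_pulse : seqA =1 pulse 2 2.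
Proof. by move=> n; rewrite /seqA /pulse dvdn2; case: (n == 0); case: (odd n). Qed.

Lemma seqB_pulse : seqB =1 pulse 3 3.
Proof. by []. Qed.

Lemma block_level_size F a m (B : block m) (i : 'I_m) :
  valid_block F a B -> F (bperm B i).+1 <= F (a + i).
Proof.
case/(_ i)=> uniq_Bi /allP Bi_in_level <-; rewrite -[F (a + i)](size_iota 0).
by apply: uniq_leq_size => // x /Bi_in_level; rewrite mem_iota.
Qed.

Lemma thin_level_first F a m (B : block m.+1) (i : 'I_m.+1) :
  valid_block F a B -> (forall k : 'I_m.+1, k != ord0 -> F (a + i) < F k.+1) ->
  bperm B i = ord0.
Proof.
move=> valid_B thin_i; apply/eqP; apply: contraTT (block_level_size i valid_B).
by move=> /thin_i; rewrite ltnNge.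
Qed.

(* Two such thin levels in a layer with nonempty levels rule out any tiling:
   some block contains a chain, and its type would send both levels to 1. *)
Lemma two_thin_levels_no_tiling F a b (i j : 'I_(b - a).+1) : i != j ->
  (forall k : 'I_(b - a).+1, 0 < F (a + k)) ->
  (forall k : 'I_(b - a).+1, k != ord0 -> F (a + i) < F k.+1) ->
  (forall k : 'I_(b - a).+1, k != ord0 -> F (a + j) < F k.+1) ->
  ~ layer_tiling F a b.
Proof.
move=> neq_ij nonempty thin_i thin_j [[|B T] [valid_T count_T]].
  by have := count_T (fun _ => 0) nonempty.
have valid_B := valid_T B (or_introl erefl).
have := thin_level_first valid_B thin_i; rewrite -(thin_level_first valid_B thin_j).
by move/perm_inj/eqP; rewrite (negbTE neq_ij).
Qed.

Lemma seq_prod_AB_no_tiling : ~ layer_tiling (seq_prod seqA seqB) 5 7.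
Proof.
by apply: (@two_thin_levels_no_tiling _ _ _ ord0 ord_max) => //; case=> [[|[|[|]]]].
Qed.

Theorem mainTheorem4 :
  cobweb_tiling_sequence seqA /\ cobweb_tiling_sequence seqB /\
  ~ cobweb_tiling_sequence (seq_prod seqA seqB).
Proof.
split; first exact: pulse_tiling_sequence seqA_pulse.
split; first exact: pulse_tiling_sequence seqB_pulse.
by case=> _ /(_ 5 7 isT isT); apply: seq_prod_AB_no_tiling.
Qed.
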